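(* Let $M$ be a right $R$-module, $D$ a direct summand of $M$ and $X$ a cyclic submodule of $M$ such that $X\,\beta^*\,D$ in $M$. Then $D$ is cyclic.
   Context: $R$ is an associative ring with identity; modules are unital right $R$-modules. $K\ll N$ means $K$ is small in $N$ ($K+L=N$ implies $L=N$). For submodules $X,Y$ of $M$, $X\,\beta^*\,Y$ means $(X+Y)/X\ll M/X$ and $(X+Y)/Y\ll M/Y$. *)

(* Right R-modules are modelled as left modules over the
   converse ring R^c: the right action m.r is written r *: m. *)
From HB Require Import structures.
From mathcomp Require Import all_boot all_order all_algebra.
Set Implicit Arguments. Unset Strict Implicit. Unset Printing Implicit Defensive.
Import GRing.Theory.
Local Open Scope ring_scope.

Section Modules.
Variables (R : pzRingType) (M : lmodType R^c).

Definition submod (X : M -> Prop) : Prop :=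
  [/\ X 0, (forall x y, X x -> X y -> X (x + y))
    & (forall (r : R^c) x, X x -> X (r *: x))].

Definition subm_incl (X Y : M -> Prop) : Prop := forall m, X m -> Y m.
Definition subm_eq (X Y : M -> Prop) : Prop := forall m, X m <-> Y m.
Definition subm_add (X Y : M -> Prop) : M -> Prop :=
  fun m => exists x y, [/\ X x, Y y & m = x + y].
Definition subm_cap (X Y : M -> Prop) : M -> Prop := fun m => X m /\ Y m.
Definition subm_full : M -> Prop := fun _ => True.
Definition subm_zero : M -> Prop := fun m => m = 0.

Definition small_in (K N : M -> Prop) : Prop :=
  forall L, submod L -> subm_incl L N ->
    subm_eq (subm_add K L) N -> subm_eq L N.

(* (X+Y)/X << M/X, expressed through the lattice isomorphism between
   submodules of M/X and submodules of M containing X: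
   for every submodule L of M with X <= L, (X+Y)+L = M implies L = M. *)
Definition small_quot (X Y : M -> Prop) : Prop :=
  forall L, submod L -> subm_incl X L ->
    subm_eq (subm_add (subm_add X Y) L) subm_full -> subm_eq L subm_full.

Definition beta_star (X Y : M -> Prop) : Prop :=
  small_quot X Y /\ small_quot Y X.

Definition direct_summand (D : M -> Prop) : Prop :=
  exists D', [/\ submod D', subm_eq (subm_add D D') subm_full
                & subm_eq (subm_cap D D') subm_zero].

Definition cyclic_submod (X : M -> Prop) : Prop :=
  exists m : M, subm_eq X (fun y => exists r : R^c, y = r *: m).

End Modules.

(* Let M = D + E with D and E independent, and X = mR. Since D + E = M,
   the smallness of (X + D)/X in M/X forces X + E = M. Hence every d in D
   is x r + y with y in E; writing m = a + b along D + E, the D-component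
   of d is a r, so D = aR. *)

From HB Require Import structures.
From mathcomp Require Import all_boot all_order all_algebra.
Set Implicit Arguments. Unset Strict Implicit. Unset Printing Implicit Defensive.
Import GRing.Theory.
Local Open Scope ring_scope.

Section SubmoduleLattice.
Variables (R : pzRingType) (M : lmodType R^c).
Implicit Types (X Y Z D E : M -> Prop).

Lemma submodB X x y : submod X -> X x -> X y -> X (x - y).
Proof.
by move=> [_ XD XZ] Xx Xy; apply: XD => //; rewrite -scaleN1r; apply: XZ.
Qed.

Lemma submod_add X Y : submod X -> submod Y -> submod (subm_add X Y).
Proof.
move=> [X0 XD XZ] [Y0 YD YZ]; split.
- by exists 0, 0; rewrite addr0.
- move=> _ _ [x1 [y1 [Xx1 Yy1 ->]]] [x2 [y2 [Xx2 Yy2 ->]]].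
  by exists (x1 + x2), (y1 + y2); rewrite addrACA; split; auto.
- move=> r _ [x [y [Xx Yy ->]]].
  by exists (r *: x), (r *: y); rewrite scalerDr; split; auto.
Qed.

Lemma subm_add_incll X Y : submod Y -> subm_incl X (subm_add X Y).
Proof. by move=> [Y0 _ _] x Xx; exists x, 0; rewrite addr0. Qed.

Lemma subm_add_inclr X Y : submod X -> subm_incl Y (subm_add X Y).
Proof. by move=> [X0 _ _] y Yy; exists 0, y; rewrite add0r. Qed.

(* X + Z is a submodule containing X, and (X + Y) + (X + Z) = M. *)
Lemma small_quot_supplement X Y Z :
  submod X -> submod Z -> small_quot X Y ->
  subm_eq (subm_add Y Z) (@subm_full R M) ->
  subm_eq (subm_add X Z) (@subm_full R M).
Proof.
move=> subX subZ smallXY YZ; apply: smallXY.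
- exact: submod_add.
- exact: subm_add_incll.
move=> m; split=> // _.
have [y [z [Yy Zz ->]]] := proj2 (YZ m) I.
by exists y, z; split; [exact: subm_add_inclr | exact: subm_add_inclr |].
Qed.

Lemma subm_cap_zero_eq D E d e :
  submod D -> subm_eq (subm_cap D E) (@subm_zero R M) ->
  D d -> D e -> E (d - e) -> d = e.
Proof.
move=> subD capDE Dd De Ede; apply/eqP; rewrite -subr_eq0; apply/eqP.
by apply/capDE; split; last exact: Ede; exact: submodB.
Qed.

Lemma cyclic_summand_of_cyclic_supplement D E X :
  submod D -> submod E ->
  subm_eq (subm_add D E) (@subm_full R M) ->
  subm_eq (subm_cap D E) (@subm_zero R M) ->
  cyclic_submod X -> subm_eq (subm_add X E) (@subm_full R M) ->
  cyclic_submod D.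
Proof.
move=> subD subE DE capDE [m Xm] XE.
have [a [b [Da Eb Em]]] := proj2 (DE m) I.
have [_ _ DZ] := subD; have [_ ED EZ] := subE.
exists a => d; split; last by move=> [r ->]; exact: DZ.
move=> Dd; have [x [y [Xx Ey Ed]]] := proj2 (XE d) I.
have [r Ex] := proj1 (Xm x) Xx.
exists r; apply: (subm_cap_zero_eq subD capDE Dd); first exact: DZ.
have -> : d - r *: a = r *: b + y.
  by rewrite Ed Ex Em scalerDr addrC !addrA addNr add0r.
by apply: ED => //; exact: EZ.
Qed.

End SubmoduleLattice.

Theorem lemma2p4 (R : pzRingType) (M : lmodType R^c) (D X : M -> Prop) :
  submod D -> direct_summand D ->
  submod X -> cyclic_submod X ->
  beta_star X D ->
  cyclic_submod D.
Proof.
move=> subD [E [subE DE capDE]] subX cycX [smallXD _].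
apply: (cyclic_summand_of_cyclic_supplement subD subE DE capDE cycX).
exact: small_quot_supplement smallXD DE.
Qed.
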